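(* Let $S=[B_{r-1},[B_r,F_X^+]_q]_q$ and $S^\tau=[B_{\tau(r-1)},[B_{\tau(r)},F_X^-]_q]_q$. Then $B_rS=SB_r$ and $B_{\tau(r)}S^\tau=S^\tau B_{\tau(r)}$ hold in $B_{\mathbf c}$.
   Context: Let $\mathbb K$ be a field of characteristic zero and $q$ an indeterminate. $n\ge1$, $I=\{1,\dots,n\}$, $\mathfrak g=\mathfrak{sl}_{n+1}(\mathbb C)$, simple roots $\alpha_i$, fundamental weights $\varpi_i$, weight lattice $P$, Cartan matrix $a_{ii}=2$, $a_{ij}=-1$ if $|i-j|=1$, else $0$, form $(\alpha_i,\alpha_j)=a_{ij}$, $(\alpha_i,\varpi_j)=\delta_{ij}$. $U_q(\mathfrak g)$ is the $\mathbb K(q^{1/2})$-algebra generated by $E_i,F_i,K_\mu$ ($\mu\in P$) with $K_0=1$, $K_\mu K_\lambda=K_{\mu+\lambda}$, $K_\mu E_i=q^{(\alpha_i,\mu)}E_iK_\mu$, $K_\mu F_i=q^{-(\alpha_i,\mu)}F_iK_\mu$, $E_iF_j-F_jE_i=\delta_{ij}\frac{K_i-K_i^{-1}}{q-q^{-1}}$ ($K_i=K_{\alpha_i}$), and the quantum Serre relations. $[a,b]_c=ab-cba$. Fix $r$ with $2\le r\le\lceil n/2\rceil-1$, $X=\{r+1,\dots,n-r\}$, $\tau(i)=n-i+1$ (on weights $\varpi_i\mapsto\varpi_{\tau(i)}$). $E_X^+=[E_{r+1},[\dots,[E_{n-r-1},E_{n-r}]_{q^{-1}}\dots]_{q^{-1}}]_{q^{-1}}$,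 $E_X^-=[E_{n-r},[\dots,[E_{r+2},E_{r+1}]_{q^{-1}}\dots]_{q^{-1}}]_{q^{-1}}$, $F_X^+=[F_{r+1},[\dots,[F_{n-r-1},F_{n-r}]_q\dots]_q]_q$, $F_X^-=[F_{n-r},[\dots,[F_{r+2},F_{r+1}]_q\dots]_q]_q$ (equal to $E_{r+1}$, $F_{r+1}$ if $|X|=1$); $K_X=K_{r+1}\cdots K_{n-r}$; $L_i=K_iK_{\tau(i)}^{-1}$. $\mathcal M_X$ is generated by $E_j,F_j,K_j^{\pm1}$ ($j\in X$); $U^0_\Theta$ by the $K_\mu$ with $-w_X\tau(\mu)=\mu$ ($w_X$ longest element of the parabolic Weyl subgroup for $X$). Parameters $c_i\in\mathbb K(q^{1/2})^\times$ ($i\in I\setminus X$) with $c_i=c_{\tau(i)}$ for $i\notin X\cup\{r,\tau(r)\}$. $B_i=F_i-c_iE_{\tau(i)}K_i^{-1}$ for $i\in I\setminus(X\cup\{r,\tau(r)\})$, $B_r=F_r-c_r[E_X^+,E_{\tau(r)}]_{q^{-1}}K_r^{-1}$, $B_{\tau(r)}=F_{\tau(r)}-c_{\tau(r)}[E_X^-,E_r]_{q^{-1}}K_{\tau(r)}^{-1}$; $B_{\mathbf c}$ is the subalgebra generated by $\mathcal M_X$, $U^0_\Theta$ and the $B_i$. *)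

From HB Require Import structures.
From mathcomp Require Import all_boot all_order all_algebra.
From mathcomp Require Import fraction.
Set Implicit Arguments. Unset Strict Implicit. Unset Printing Implicit Defensive.
Import Order.TTheory GRing.Theory Num.Theory.
Local Open Scope ring_scope.

(* The field K(q^{1/2}) : rational functions in the indeterminate v = q^{1/2}. *)
Definition ratfun (k : fieldType) := {fraction {poly k}}.
Definition qhalf (k : fieldType) : ratfun k := tofrac 'X.
Definition qpar (k : fieldType) : ratfun k := (qhalf k) ^+ 2.

(* Weights of sl_{n+1}: P = Z^n in the basis of fundamental weights,
   mu = sum_j mu_j varpi_j ; coordinates indexed 1..n (as nat). *)
Definition wt (n : nat) := {ffun 'I_n -> int}.
Definition coord (n : nat) (mu : wt n) (i : nat) : int :=
  \sum_(k < n | k.+1 == i) mu k.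

Definition cartan (i j : nat) : int :=
  if i == j then 2 else if (i == j.+1) || (j == i.+1) then -1 else 0.

Definition alpha (n : nat) (i : nat) : wt n := [ffun k : 'I_n => cartan i k.+1].

Section Uq.
Variables (F : fieldType) (A : algType F).

Definition qcomm (a b : A) (c : F) : A := a * b - c *: (b * a).

(* Defining relations of U_q(sl_{n+1}) for generators E_i, F_i (i = 1..n)
   and K_mu (mu in P), with q in F. (alpha_i, mu) = coord mu i. *)
Definition UqRel (n : nat) (q : F) (E Fg : nat -> A) (K : wt n -> A) : Prop :=
  [/\ K 0 = 1,
      (forall mu la : wt n, K (mu + la) = K mu * K la),
      (forall (mu : wt n) i, (1 <= i <= n)%N ->
          K mu * E i = (q ^ coord mu i) *: (E i * K mu)),
      (forall (mu : wt n) i, (1 <= i <= n)%N ->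
          K mu * Fg i = (q ^ (- coord mu i)) *: (Fg i * K mu)) &
      (forall i j, (1 <= i <= n)%N -> (1 <= j <= n)%N ->
          E i * Fg j - Fg j * E i =
          if i == j then (q - q^-1)^-1 *: (K (alpha n i) - K (- alpha n i))
          else 0) /\
      (forall i j, (1 <= i <= n)%N -> (1 <= j <= n)%N ->
          (cartan i j = -1 ->
                 E i ^+ 2 * E j - (q + q^-1) *: (E i * E j * E i)
                   + E j * E i ^+ 2 = 0 /\
                 Fg i ^+ 2 * Fg j - (q + q^-1) *: (Fg i * Fg j * Fg i)
                   + Fg j * Fg i ^+ 2 = 0) /\
              (cartan i j = 0 -> E i * E j = E j * E i /\
                                 Fg i * Fg j = Fg j * Fg i))].

Variables (n r : nat) (q : F) (E Fg : nat -> A) (K : wt n -> A) (c : nat -> F).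

Definition tau (i : nat) : nat := (n - i).+1.

(* E_X^+ = [E_{r+1},[...,[E_{n-r-1},E_{n-r}]_{q^-1}...]_{q^-1}]_{q^-1} *)
Definition EXp : A :=
  foldr (fun i acc => qcomm (E i) acc q^-1) (E (n - r)) (iota r.+1 (n - r - r).-1).
(* E_X^- = [E_{n-r},[...,[E_{r+2},E_{r+1}]_{q^-1}...]_{q^-1}]_{q^-1} *)
Definition EXm : A :=
  foldr (fun i acc => qcomm (E i) acc q^-1) (E r.+1) (rev (iota r.+2 (n - r - r).-1)).
Definition FXp : A :=
  foldr (fun i acc => qcomm (Fg i) acc q) (Fg (n - r)) (iota r.+1 (n - r - r).-1).
Definition FXm : A :=
  foldr (fun i acc => qcomm (Fg i) acc q) (Fg r.+1) (rev (iota r.+2 (n - r - r).-1)).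

(* K_i^{-1} = K_{-alpha_i} *)
Definition Bgen (i : nat) : A := Fg i - c i *: (E (tau i) * K (- alpha n i)).
Definition Br : A := Fg r - c r *: (qcomm EXp (E (tau r)) q^-1 * K (- alpha n r)).
Definition Btr : A :=
  Fg (tau r) - c (tau r) *: (qcomm EXm (E r) q^-1 * K (- alpha n (tau r))).

Definition Sel : A := qcomm (Bgen r.-1) (qcomm Br FXp q) q.
Definition Stau : A := qcomm (Bgen (tau r.-1)) (qcomm Btr FXm q) q.

End Uq.

From Pilot Require Import Defs.
From HB Require Import structures.
From mathcomp Require Import all_boot all_order all_algebra.
From mathcomp Require Import fraction.
From mathcomp Require Import ring zify.
Set Implicit Arguments. Unset Strict Implicit. Unset Printing Implicit Defensive.
Import Order.TTheory GRing.Theory Num.Theory.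
Local Open Scope ring_scope.

(* Both identities are instances of one statement about a chain of simple roots
   0 - 1 - ... - m+3 of type A, embedded in the Dynkin diagram as r-1, r, X, tau(r),
   tau(r-1), read forwards for B_r and backwards for B_tau(r). On such a chain,
   B_1 commutes with S = [B_0, [B_1, F_X]_q]_q by an identity valid in any algebra
   (commute_nested_qcomm), as soon as B_0 commutes with F_X and B_1 satisfies the
   quantum Serre relations with F_X and with B_0. These Serre relations come from
   those of the generators: the root vectors [E_s, [..., E_(m+2)]_(q^-1)]_(q^-1)
   satisfy Serre relations with the neighbouring E's, and their commutators with
   [F_s, [..., F_(m+1)]_q]_q are computed by downward induction on s. *)

(** * Normalisation of noncommutative polynomial identities *)

Inductive sexpr :=
  SAtom of nat | SZero | SOne | SAdd of sexpr & sexpr | SMul of sexpr & sexpr | SOpp of sexpr.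

Inductive aexpr :=
  | AAtom of nat | AZero | AOne | AAdd of aexpr & aexpr | AMul of aexpr & aexpr
  | AOpp of aexpr | AScale of sexpr & aexpr.

Definition monomial := (sexpr * seq nat)%type.
Definition ncpoly := seq monomial.

Fixpoint expand (e : aexpr) : ncpoly :=
  match e with
  | AAtom i => [:: (SOne, [:: i])]
  | AZero => [::]
  | AOne => [:: (SOne, [::])]
  | AAdd x y => expand x ++ expand y
  | AMul x y =>
      [seq (SMul m1.1 m2.1, m1.2 ++ m2.2) | m1 <- expand x, m2 <- expand y]
  | AOpp x => [seq (SOpp m.1, m.2) | m <- expand x]
  | AScale c x => [seq (SMul c m.1, m.2) | m <- expand x]
  end.

Fixpoint word_of (e : aexpr) : option (seq nat) :=
  match e with
  | AAtom i => Some [:: i]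
  | AOne => Some [::]
  | AMul x y => if (word_of x, word_of y) is (Some a, Some b) then Some (a ++ b) else None
  | _ => None
  end.

Fixpoint find_factor (l w : seq nat) : option (seq nat * seq nat) :=
  if take (size l) w == l then Some ([::], drop (size l) w) else
  if w is x :: w' then
    if find_factor l w' is Some (w1, w2) then Some (x :: w1, w2) else None
  else None.

Definition rewrite_rule := (seq nat * ncpoly)%type.

Fixpoint rewrite_monomial (rs : seq rewrite_rule) (m : monomial) : option ncpoly :=
  if rs is r :: rs' then
    if find_factor r.1 m.2 is Some (w1, w2)
    then Some [seq (SMul m.1 m'.1, w1 ++ m'.2 ++ w2) | m' <- r.2]
    else rewrite_monomial rs' m
  else None.

Fixpoint reduce (rs : seq rewrite_rule) (fuel : nat) (p : ncpoly) : ncpoly :=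
  if fuel is f.+1 then
    if p is m :: p' then
      if rewrite_monomial rs m is Some ms then reduce rs f (ms ++ p')
      else m :: reduce rs f p'
    else [::]
  else p.

Fixpoint insert_term (w : seq nat) (c : sexpr) (l : seq (seq nat * sexpr)) :=
  if l is (w', c') :: l' then
    if w == w' then (w, SAdd c' c) :: l' else (w', c') :: insert_term w c l'
  else [:: (w, c)].

Definition collect (p : ncpoly) := foldr (fun m l => insert_term m.2 m.1 l) [::] p.

Definition rules_of (eqs : seq (aexpr * aexpr)) : seq rewrite_rule :=
  pmap (fun eq => if word_of eq.1 is Some ((_ :: _) as w) then Some (w, expand eq.2) else None)
    eqs.

Definition residual_coefs (eqs : seq (aexpr * aexpr)) (fuel : nat) (e1 e2 : aexpr) :=
  map snd (collect (reduce (rules_of eqs) fuel (expand (AAdd e1 (AOpp e2))))).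

Section NCEval.
Variables (F : fieldType) (A : algType F) (sl : seq F) (al : seq A).

Fixpoint eval_sexpr (c : sexpr) : F :=
  match c with
  | SAtom i => nth 0 sl i | SZero => 0 | SOne => 1
  | SAdd x y => eval_sexpr x + eval_sexpr y
  | SMul x y => eval_sexpr x * eval_sexpr y
  | SOpp x => - eval_sexpr x
  end.

Fixpoint eval_aexpr (e : aexpr) : A :=
  match e with
  | AAtom i => nth 0 al i | AZero => 0 | AOne => 1
  | AAdd x y => eval_aexpr x + eval_aexpr y
  | AMul x y => eval_aexpr x * eval_aexpr y
  | AOpp x => - eval_aexpr x
  | AScale c x => eval_sexpr c *: eval_aexpr x
  end.

Definition eval_word (w : seq nat) : A := foldr (fun i acc => nth 0 al i * acc) 1 w.
Definition eval_poly (p : ncpoly) : A := \sum_(m <- p) eval_sexpr m.1 *: eval_word m.2.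

Lemma eval_word_cat w1 w2 : eval_word (w1 ++ w2) = eval_word w1 * eval_word w2.
Proof. by elim: w1 => [|i w IH] /=; rewrite ?mul1r // IH mulrA. Qed.

Lemma eval_poly_cat p1 p2 : eval_poly (p1 ++ p2) = eval_poly p1 + eval_poly p2.
Proof. by rewrite /eval_poly big_cat. Qed.

Lemma eval_expand e : eval_poly (expand e) = eval_aexpr e.
Proof.
rewrite /eval_poly; elim: e => [i||| x IHx y IHy| x IHx y IHy| x IHx| c x IHx] /=.
- by rewrite big_seq1 /= scale1r mulr1.
- by rewrite big_nil.
- by rewrite big_seq1 scale1r.
- by rewrite big_cat IHx IHy.
- rewrite -IHx -IHy big_allpairs_dep mulr_suml; apply: eq_bigr => m1 _.
  rewrite mulr_sumr; apply: eq_bigr => m2 _ /=.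
  by rewrite eval_word_cat -scalerAl -scalerAr scalerA.
- by rewrite -IHx big_map -sumrN; apply: eq_bigr => m _; rewrite scaleNr.
- by rewrite -IHx big_map scaler_sumr; apply: eq_bigr => m _; rewrite scalerA.
Qed.

Lemma eval_word_of e w : word_of e = Some w -> eval_word w = eval_aexpr e.
Proof.
elim: e w => [i||| x IHx y IHy| x IHx y IHy| x IHx| c x IHx] w //=.
- by case=> <-; rewrite /= mulr1.
- by case=> <-.
- case Ex: (word_of x) => [a|] //; case Ey: (word_of y) => [b|] //.
  by case=> <-; rewrite eval_word_cat (IHx _ Ex) (IHy _ Ey).
Qed.

Lemma find_factorP l w w1 w2 : find_factor l w = Some (w1, w2) -> w = w1 ++ l ++ w2.
Proof.
elim: w w1 w2 => [|x w IH] w1 w2 /=.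
- by case: eqP => // <- [<- <-].
- case: eqP => [E [<- <-]|_]; first by rewrite /= -{1}E cat_take_drop.
  by case E: (find_factor l w) => [[a b]|] //= [<- <-]; rewrite (IH _ _ E).
Qed.

Fixpoint rules_sound (rs : seq rewrite_rule) : Prop :=
  if rs is r :: rs' then eval_word r.1 = eval_poly r.2 /\ rules_sound rs' else True.

Lemma rewrite_monomial_sound rs m ms : rules_sound rs ->
  rewrite_monomial rs m = Some ms -> eval_poly ms = eval_sexpr m.1 *: eval_word m.2.
Proof.
elim: rs => [|r rs IH] //= [Hr Hrs].
case E: (find_factor r.1 m.2) => [[w1 w2]|]; last exact: IH.
case=> <-; rewrite (find_factorP E) /eval_poly big_map !eval_word_cat Hr.
rewrite /eval_poly mulr_suml mulr_sumr scaler_sumr; apply: eq_bigr => m' _ /=.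
by rewrite !eval_word_cat -scalerAl -scalerAr scalerA mulrA.
Qed.

Lemma eval_reduce rs fuel p : rules_sound rs -> eval_poly (reduce rs fuel p) = eval_poly p.
Proof.
move=> Hrs; elim: fuel p => [|f IH] [|m p] //=.
case E: (rewrite_monomial rs m) => [ms|].
- by rewrite IH eval_poly_cat (rewrite_monomial_sound Hrs E) /eval_poly big_cons.
- by rewrite /eval_poly !big_cons -/(eval_poly _) IH.
Qed.

Definition eval_collected (l : seq (seq nat * sexpr)) : A :=
  \sum_(m <- l) eval_sexpr m.2 *: eval_word m.1.

Lemma eval_insert_term w c l :
  eval_collected (insert_term w c l) = eval_sexpr c *: eval_word w + eval_collected l.
Proof.
rewrite /eval_collected; elim: l => [|[w' c'] l IH] /=; first by rewrite big_seq1 big_nil addr0.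
case: eqP => [->|_]; rewrite !big_cons /=; first by rewrite scalerDl addrCA addrA.
by rewrite IH addrCA.
Qed.

Lemma eval_collect p : eval_collected (collect p) = eval_poly p.
Proof.
elim: p => [|m p IH] /=; first by rewrite /eval_collected /eval_poly !big_nil.
by rewrite eval_insert_term IH /eval_poly big_cons.
Qed.

Fixpoint implies_eqs (eqs : seq (aexpr * aexpr)) (P : Prop) : Prop :=
  if eqs is eq :: eqs' then eval_aexpr eq.1 = eval_aexpr eq.2 -> implies_eqs eqs' P else P.

Fixpoint all_zero (cs : seq sexpr) : Prop :=
  if cs is c :: cs' then eval_sexpr c = 0 /\ all_zero cs' else True.

Lemma residual_coefs_sound eqs fuel e1 e2 cs :
  residual_coefs eqs fuel e1 e2 = cs -> all_zero cs ->
  implies_eqs eqs (eval_aexpr e1 = eval_aexpr e2).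
Proof.
move=> <- Hz; suff Hsound : rules_sound (rules_of eqs) -> eval_aexpr e1 = eval_aexpr e2.
  elim: eqs Hsound {Hz} => [|[l r] eqs IH] /= Hsound; first exact: Hsound.
  move=> Hlr; apply: IH => Hrs; apply: Hsound; rewrite /rules_of /=.
  case E: (word_of l) => [[|i w]|] //=.
  by split=> //; rewrite eval_expand -Hlr -(eval_word_of E).
move=> Hrs; apply/eqP; rewrite -subr_eq0; apply/eqP.
rewrite -[_ - _]/(eval_aexpr (AAdd e1 (AOpp e2))) -eval_expand.
rewrite -(eval_reduce fuel _ Hrs) -eval_collect.
move: Hz; rewrite /residual_coefs /eval_collected.
elim: (collect _) => [|[w c] l IH] /=; first by rewrite big_nil.
by case=> Hc Hl; rewrite big_cons /= Hc scale0r add0r IH.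
Qed.

End NCEval.

Ltac list_snoc l x :=
  lazymatch l with
  | nil => constr:(x :: nil)
  | ?h :: ?t => let t' := list_snoc t x in constr:(h :: t')
  end.

Ltac list_length l :=
  lazymatch l with
  | nil => constr:(0%N)
  | _ :: ?t => let k := list_length t in constr:(k.+1)
  end.

Ltac list_index x l :=
  lazymatch l with
  | nil => constr:(@None nat)
  | x :: _ => constr:(Some 0%N)
  | _ :: ?t =>
      lazymatch list_index x t with Some ?k => constr:(Some k.+1) | None => constr:(@None nat) end
  end.

Ltac add_atom x l :=
  lazymatch list_index x l with
  | Some ?k => constr:((k, l))
  | None => let k := list_length l in let l' := list_snoc l x in constr:((k, l'))
  end.

Ltac reify_scalar c ls :=
  lazymatch c with
  | 0%R => constr:((SZero, ls))
  | 1%R => constr:((SOne, ls))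
  | (?x + ?y)%R =>
      lazymatch reify_scalar x ls with (?ex, ?ls1) =>
      lazymatch reify_scalar y ls1 with (?ey, ?ls2) => constr:((SAdd ex ey, ls2)) end end
  | (?x * ?y)%R =>
      lazymatch reify_scalar x ls with (?ex, ?ls1) =>
      lazymatch reify_scalar y ls1 with (?ey, ?ls2) => constr:((SMul ex ey, ls2)) end end
  | (- ?x)%R => lazymatch reify_scalar x ls with (?ex, ?ls1) => constr:((SOpp ex, ls1)) end
  | _ => lazymatch add_atom c ls with (?k, ?ls1) => constr:((SAtom k, ls1)) end
  end.

Ltac reify_alg t la ls :=
  lazymatch t with
  | qcomm ?x ?y ?c => reify_alg (x * y - c *: (y * x))%R la ls
  | 0%R => constr:((AZero, la, ls))
  | 1%R => constr:((AOne, la, ls))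
  | (?x + ?y)%R =>
      lazymatch reify_alg x la ls with (?ex, ?la1, ?ls1) =>
      lazymatch reify_alg y la1 ls1 with (?ey, ?la2, ?ls2) =>
        constr:((AAdd ex ey, la2, ls2)) end end
  | (?x * ?y)%R =>
      lazymatch reify_alg x la ls with (?ex, ?la1, ?ls1) =>
      lazymatch reify_alg y la1 ls1 with (?ey, ?la2, ?ls2) =>
        constr:((AMul ex ey, la2, ls2)) end end
  | (- ?x)%R =>
      lazymatch reify_alg x la ls with (?ex, ?la1, ?ls1) => constr:((AOpp ex, la1, ls1)) end
  | (?c *: ?x)%R =>
      lazymatch reify_scalar c ls with (?ec, ?ls0) =>
      lazymatch reify_alg x la ls0 with (?ex, ?la1, ?ls1) =>
        constr:((AScale ec ex, la1, ls1)) end end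
  | _ => lazymatch add_atom t la with (?k, ?la1) => constr:((AAtom k, la1, ls)) end
  end.

Ltac reify_implication G la ls :=
  lazymatch G with
  | (?L = ?R) -> ?G' =>
      lazymatch reify_alg L la ls with (?eL, ?la1, ?ls1) =>
      lazymatch reify_alg R la1 ls1 with (?eR, ?la2, ?ls2) =>
      lazymatch reify_implication G' la2 ls2 with (?eqs, ?goal, ?la3, ?ls3) =>
        constr:(((eL, eR) :: eqs, goal, la3, ls3)) end end end
  | ?L = ?R =>
      lazymatch reify_alg L la ls with (?eL, ?la1, ?ls1) =>
      lazymatch reify_alg R la1 ls1 with (?eR, ?la2, ?ls2) =>
        constr:((@nil (aexpr * aexpr), (eL, eR), la2, ls2)) end end
  end.

(* [nc_ring] proves goals [L1 = R1 -> ... -> Lk = Rk -> L = R] in an algebra over a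
   field. A hypothesis whose left side is a product of atoms is used as a rewrite rule
   from left to right; the others are ignored. Atoms are the maximal subterms not
   built from [0], [1], [+], [-], [*], [*:] and [qcomm]. The final [field] call needs
   its nonzeroness side conditions to be in the context. *)
Ltac nc_ring :=
  let fuel := constr:((2 ^ 17)%N) in
  lazymatch goal with |- ?G =>
  lazymatch G with context [@eq ?T _ _] =>
  let la0 := constr:(@nil T) in
  (* the scalar field of [T], read off the type of [eval_aexpr] *)
  let ls0 := lazymatch type of (fun l => eval_aexpr l la0 AZero) with
             | seq ?S -> _ => constr:(@nil S) end in
  lazymatch reify_implication G la0 ls0 with (?eqs, (?eL, ?eR), ?la, ?ls) =>
  let cs := eval vm_compute in (residual_coefs eqs fuel eL eR) in
  change (implies_eqs ls la eqs (eval_aexpr ls la eL = eval_aexpr ls la eR));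
  apply: (@residual_coefs_sound _ _ ls la eqs fuel eL eR cs);
    [ vm_compute; reflexivity
    | cbn [all_zero eval_sexpr nth]; repeat split; field;
      repeat (apply/andP; split); done ]
  end end end.

(** * q-commutators and quantum Serre relations *)

Lemma down_ind (P : nat -> Prop) t :
  P t -> (forall s, (s < t)%N -> P s.+1 -> P s) -> forall s, (s <= t)%N -> P s.
Proof.
move=> Pt IH s; move Hd: (t - s)%N => d; elim: d s Hd => [|d IHd] s Hd hs.
  by have -> : s = t by lia.
by apply: IH; [lia | apply: IHd; lia].
Qed.

Lemma map_subn_iota N s k : (s + k <= N.+1)%N ->
  map (subn N) (iota s k) = rev (iota (N.+1 - s - k) k).
Proof.
elim: k s => [|k IH] s hsk //; rewrite [LHS]/= IH; last lia.
have -> : iota (N.+1 - s - k.+1) k.+1 = iota (N.+1 - s - k.+1) k ++ [:: N - s]%N.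
  by rewrite -[k.+1]addn1 iotaD /=; congr (_ ++ [:: _]); lia.
by rewrite rev_cat /=; congr (_ :: rev (iota _ _)); lia.
Qed.

Section QChain.
Variables (F : fieldType) (A : algType F).
Implicit Types (g : nat -> A) (c l : F) (u v x y : A).

Definition qchain g c (s t : nat) : A :=
  foldr (fun j acc => qcomm (g j) acc c) (g t) (iota s (t - s)).

Lemma qchain_id g c t : qchain g c t t = g t.
Proof. by rewrite /qchain subnn. Qed.

Lemma qchainS g c s t : (s < t)%N -> qchain g c s t = qcomm (g s) (qchain g c s.+1 t) c.
Proof. by move=> hst; rewrite /qchain -(subnSK hst). Qed.

Lemma commute_qcomm y u v c :
  y * u = u * y -> y * v = v * y -> y * qcomm u v c = qcomm u v c * y.
Proof. nc_ring. Qed.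

Lemma skew_commute_qcomm y u v c l1 l2 :
  y * u = l1 *: (u * y) -> y * v = l2 *: (v * y) ->
  y * qcomm u v c = (l1 * l2) *: (qcomm u v c * y).
Proof. nc_ring. Qed.

Lemma skew_swap l x y : l != 0 -> y * x = l *: (x * y) -> x * y = l^-1 *: (y * x).
Proof. by move=> hl ->; rewrite scalerA mulVf // scale1r. Qed.

Lemma commute_qchain y g c s t : (s <= t)%N ->
  (forall j, (s <= j <= t)%N -> y * g j = g j * y) -> y * qchain g c s t = qchain g c s t * y.
Proof.
move=> hst; elim/down_ind: s / hst => [|s hst IH] Hg; first by rewrite qchain_id Hg ?leqnn.
rewrite qchainS // commute_qcomm ?Hg //; first lia.
by apply: IH => j hj; apply: Hg; lia.
Qed.

Lemma skew_commute_qchain y g c l s t : (s <= t)%N ->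
  y * g s = l *: (g s * y) -> (forall j, (s < j <= t)%N -> y * g j = g j * y) ->
  y * qchain g c s t = l *: (qchain g c s t * y).
Proof.
move=> hst hys Hg; have [hlt|hts] := ltnP s t; last first.
  have -> : t = s by lia.
  by rewrite qchain_id.
rewrite qchainS // -[l]mulr1; apply: skew_commute_qcomm => //.
by rewrite scale1r; apply: commute_qchain => // j hj; apply: Hg; lia.
Qed.

Lemma qchain_rcons g c s t : (s <= t)%N ->
  (forall j, (s <= j < t)%N -> g t.+1 * g j = g j * g t.+1) ->
  qchain g c s t.+1 = qcomm (qchain g c s t) (g t.+1) c.
Proof.
move=> hst; elim/down_ind: s / hst => [|s hst IH] Hg; first by rewrite qchainS // !qchain_id.
rewrite qchainS 1?ltnW // IH; last by move=> j hj; apply: Hg; lia.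
rewrite [qchain g c s t]qchainS //; move: (Hg s ltac:(lia)); nc_ring.
Qed.

Lemma qchain_shift g c k s t :
  qchain (fun j => g (k + j)%N) c s t = qchain g c (k + s) (k + t).
Proof. by rewrite /qchain subnDl iotaDl foldr_map. Qed.

Lemma qchain_reflect g c N s t :
  (s <= t <= N)%N -> qchain (fun j => g (N - j)%N) c s t =
  foldr (fun i acc => qcomm (g i) acc c) (g (N - t)%N) (rev (iota (N - t).+1 (t - s))).
Proof.
move=> hst; rewrite /qchain -(_ : N.+1 - s - (t - s) = (N - t).+1)%N; last lia.
by rewrite -map_subn_iota ?foldr_map //; lia.
Qed.

End QChain.

Section QSerre.
Variables (F : fieldType) (A : algType F) (q : F).
Hypotheses (q_neq0 : q != 0) (qq1_neq0 : q * q + 1 != 0).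
Implicit Types (a b u v w x y : A).

Definition serre v u : A := v * v * u - (q + q^-1) *: (v * u * v) + u * v * v.

Lemma qaddV_neq0 : q + q^-1 != 0.
Proof.
apply: contra qq1_neq0 => /eqP h; apply/eqP.
by have := congr1 (GRing.mul q) h; rewrite mulrDr mulfV // mulr0.
Qed.

Lemma serre_mid v u : serre v u = 0 -> v * u * v = (q + q^-1)^-1 *: (v * v * u + u * v * v).
Proof.
move=> h; apply: (canRL (scalerK qaddV_neq0)); apply/eqP; rewrite -subr_eq0 -oppr_eq0 -h.
by apply/eqP; rewrite /serre; nc_ring.
Qed.

Lemma serre_left v u : serre v u = 0 -> v * v * u = (q + q^-1) *: (v * u * v) - u * v * v.
Proof. by move=> h; apply/eqP; rewrite -subr_eq0 -h /serre; apply/eqP; nc_ring. Qed.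

Lemma serre_qcomm_commute v g h c :
  v * g = g * v -> serre v h = 0 -> serre v (qcomm h g c) = 0.
Proof. by move=> hvg /serre_left; rewrite /serre; move: hvg; nc_ring. Qed.

Lemma serre_skew_l v u : serre v u = 0 -> v * qcomm v u q^-1 = q *: (qcomm v u q^-1 * v).
Proof. by move=> h; apply/eqP; rewrite -subr_eq0 -h /serre; apply/eqP; nc_ring. Qed.

Lemma serre_skew_r w v : serre w v = 0 -> qcomm v w q^-1 * w = q *: (w * qcomm v w q^-1).
Proof. by move=> h; apply/eqP; rewrite -subr_eq0 -h /serre; apply/eqP; nc_ring. Qed.

Lemma eq_of_sub_qinv2 x y : x - y = (q^-1 * q^-1) *: (y - x) -> x = y.
Proof.
move=> h; apply/eqP; rewrite -subr_eq0; apply/eqP.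
have qinv2_neq0 : 1 + q^-1 * q^-1 != 0.
  apply: contra qq1_neq0 => /eqP h0; apply/eqP.
  by have := congr1 (GRing.mul (q * q)) h0; rewrite mulr0 => <-; field.
apply: (scalerI qinv2_neq0); rewrite scaler0.
have -> : (1 + q^-1 * q^-1) *: (x - y) = (x - y) - (q^-1 * q^-1) *: (y - x) by nc_ring.
by rewrite h subrr.
Qed.

Lemma serre_qcomm_l u v w : u * w = w * u ->
  serre v u = 0 -> serre v w = 0 -> serre w v = 0 -> serre (qcomm v w q^-1) u = 0.
Proof.
move=> huw hvu hvw hwv.
set Z := qcomm v w q^-1; pose P := qcomm v u q^-1; pose Y := qcomm Z u q^-1.
have hvP : v * P = q *: (P * v) := serre_skew_l hvu.
have hZv : Z * v = q^-1 *: (v * Z) := skew_swap q_neq0 (serre_skew_l hvw).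
have hZw : Z * w = q *: (w * Z) := serre_skew_r hwv.
have hY : Y = P * w - q^-1 *: (w * P) by rewrite /Y /Z /P; move: huw; nc_ring.
have hZu : Z * u = q^-1 *: (u * Z) + Y by rewrite /Y; nc_ring.
have hvw' : v * w = Z + q^-1 *: (w * v) by rewrite /Z; nc_ring.
have hvu' : v * u = P + q^-1 *: (u * v) by rewrite /P; nc_ring.
have hZP : Z * P = P * Z.
  apply: eq_of_sub_qinv2; rewrite {1}(_ : Z * P = Z * qcomm v u q^-1) //.
  by move: hZv hZu hY hvP hvw' hvu'; nc_ring.
have hZY : Z * Y = q *: (Y * Z) by rewrite hY; move: hZw hZP; nc_ring.
have -> : serre Z u = Z * Y - q *: (Y * Z) by rewrite /Y /serre; nc_ring.
by rewrite hZY subrr.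
Qed.

Lemma serre_qcomm_r u w x : u * x = x * u ->
  serre u w = 0 -> serre w u = 0 -> serre w x = 0 -> serre (qcomm u w q^-1) x = 0.
Proof.
move=> hux huw hwu hwx.
set Z := qcomm u w q^-1; pose P := qcomm x w q^-1; pose Y := qcomm x Z q^-1.
have hPw : P * w = q *: (w * P) := serre_skew_r hwx.
have hwZ : w * Z = q^-1 *: (Z * w) := skew_swap q_neq0 (serre_skew_r hwu).
have huZ : u * Z = q *: (Z * u) := serre_skew_l huw.
have hY : Y = u * P - q^-1 *: (P * u) by rewrite /Y /Z /P; move: hux; nc_ring.
have hxZ : x * Z = q^-1 *: (Z * x) + Y by rewrite /Y; nc_ring.
have huw' : u * w = Z + q^-1 *: (w * u) by rewrite /Z; nc_ring.
have hxw' : x * w = P + q^-1 *: (w * x) by rewrite /P; nc_ring.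
have hPZ : P * Z = Z * P.
  apply: eq_of_sub_qinv2; rewrite {1}(_ : P * Z = qcomm x w q^-1 * Z) //.
  by move: hwZ hxZ hY hPw huw' hxw'; nc_ring.
have hYZ : Y * Z = q *: (Z * Y) by rewrite hY; move: huZ hPZ; nc_ring.
have -> : serre Z x = Y * Z - q *: (Z * Y) by rewrite /Y /serre; nc_ring.
by rewrite hYZ subrr.
Qed.

Lemma commute_nested_qcomm a b x : a * x = x * a -> serre b x = 0 -> serre b a = 0 ->
  b * qcomm a (qcomm b x q) q = qcomm a (qcomm b x q) q * b.
Proof. by move=> hax /serre_mid hbx /serre_mid hba; move: hax hbx hba; nc_ring. Qed.

Section SerreChain.
Variables (g : nat -> A) (hi : nat).
Hypothesis g_far : forall i j, (i.+2 <= j <= hi)%N -> g i * g j = g j * g i.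
Hypothesis g_serre : forall i, (i < hi)%N -> serre (g i) (g i.+1) = 0 /\ serre (g i.+1) (g i) = 0.

Lemma serre_g_qchain c s t : (s <= t < hi)%N -> serre (g s) (qchain g c s.+1 t.+1) = 0.
Proof.
move=> /andP[hst ht]; have [hlt|hts] := ltnP s t; last first.
  have -> : t = s by lia.
  by rewrite qchain_id; apply: (g_serre _).1; lia.
rewrite qchainS //; apply: serre_qcomm_commute; last by apply: (g_serre _).1; lia.
by apply: commute_qchain => // j hj; apply: g_far; lia.
Qed.

Lemma serre_qchain_g s t : (s <= t < hi)%N -> serre (qchain g q^-1 s.+1 t.+1) (g s) = 0.
Proof.
move=> /andP[hst ht]; elim/down_ind: s / hst => [|s hst IH].
  by rewrite qchain_id; apply: (g_serre _).2.
rewrite qchainS //; apply: serre_qcomm_l.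
- by apply: commute_qchain => // j hj; apply: g_far; lia.
- by apply: (g_serre _).2; lia.
- by apply: serre_g_qchain; lia.
- exact: IH.
Qed.

Lemma serre_qchain_next s t : (s <= t < hi)%N -> serre (qchain g q^-1 s t) (g t.+1) = 0.
Proof.
move=> /andP[hst ht]; elim/down_ind: s / hst => [|s hst IH].
  by rewrite qchain_id; apply: (g_serre _).1.
rewrite qchainS //; case: t ht hst IH => [|t] ht hst IH; first by [].
apply: serre_qcomm_r; first by apply: g_far; lia.
- by apply: serre_g_qchain; lia.
- by apply: serre_qchain_g; lia.
- exact: IH.
Qed.

End SerreChain.

End QSerre.

(** * A chain of type A *)

Lemma cartan_diag i : cartan i i = 2.
Proof. by rewrite /cartan eqxx. Qed.

Lemma cartan_succr i : cartan i i.+1 = -1.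
Proof. by rewrite /cartan (ltn_eqF (ltnSn i)) eqxx orbT. Qed.

Lemma cartan_succl i : cartan i.+1 i = -1.
Proof. by rewrite /cartan (gtn_eqF (ltnSn i)) eqxx. Qed.

Lemma cartan_far i j : (i.+1 < j)%N || (j.+1 < i)%N -> cartan i j = 0.
Proof.
move=> hij; rewrite /cartan.
by case: eqP => [?|_]; [lia | case: eqP => [?|_]; [lia | case: eqP => [?|_] //; lia]].
Qed.

Lemma cartan_eq2 i j : cartan i j = 2 -> i = j.
Proof. by rewrite /cartan; case: eqP => // _; case: ifP. Qed.

Lemma cartan_congr a b c d : (a == b) = (c == d) ->
  ((a == b.+1) || (b == a.+1)) = ((c == d.+1) || (d == c.+1)) -> cartan a b = cartan c d.
Proof. by rewrite /cartan => -> ->. Qed.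

(* Nodes 0, ..., m+3 of a chain of type A; [kp i] and [km i] stand for K_(alpha_i) and
   its inverse. In the application, nodes 0, 1, m+2, m+3 are r-1, r, tau(r), tau(r-1)
   and nodes 2, ..., m+1 form X. *)
Section TypeAChain.
Variables (F : fieldType) (A : algType F) (q : F).
Hypotheses (q_neq0 : q != 0) (qq1_neq0 : q * q + 1 != 0).
(* Only needed for [field] to normalise the factor [(q - q^-1)^-1] of [e_f_diag]. *)
Hypothesis qq1_sub_neq0 : q * q - 1 != 0.
Variables (m : nat) (e f kp km : nat -> A).
Hypothesis m_gt0 : (0 < m)%N.
Hypothesis e_f_comm : forall i j, (i <= m.+3)%N -> (j <= m.+3)%N -> i != j ->
  e i * f j = f j * e i.
Hypothesis e_f_diag : forall i, (i <= m.+3)%N ->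
  e i * f i = f i * e i + (q - q^-1)^-1 *: (kp i - km i).
Hypothesis e_far : forall i j, (i.+2 <= j <= m.+3)%N -> e i * e j = e j * e i.
Hypothesis f_far : forall i j, (i.+2 <= j <= m.+3)%N -> f i * f j = f j * f i.
Hypothesis e_serre : forall i, (i < m.+3)%N ->
  serre q (e i) (e i.+1) = 0 /\ serre q (e i.+1) (e i) = 0.
Hypothesis f_serre : forall i, (i < m.+3)%N ->
  serre q (f i) (f i.+1) = 0 /\ serre q (f i.+1) (f i) = 0.
Hypothesis km_e : forall i j, (i <= m.+3)%N -> (j <= m.+3)%N ->
  km i * e j = q ^ (- cartan i j) *: (e j * km i).
Hypothesis kp_e : forall i j, (i <= m.+3)%N -> (j <= m.+3)%N ->
  kp i * e j = q ^ (cartan i j) *: (e j * kp i).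
Hypothesis km_f : forall i j, (i <= m.+3)%N -> (j <= m.+3)%N ->
  km i * f j = q ^ (cartan i j) *: (f j * km i).
Hypothesis km_comm : forall i j, km i * km j = km j * km i.

Lemma km_e_far i j : (i <= m.+3)%N -> (j <= m.+3)%N -> (i.+1 < j)%N || (j.+1 < i)%N ->
  km i * e j = e j * km i.
Proof. by move=> hi hj hij; rewrite km_e // cartan_far // oppr0 expr0z scale1r. Qed.

Lemma kp_e_far i j : (i <= m.+3)%N -> (j <= m.+3)%N -> (i.+1 < j)%N || (j.+1 < i)%N ->
  kp i * e j = e j * kp i.
Proof. by move=> hi hj hij; rewrite kp_e // cartan_far // expr0z scale1r. Qed.

Lemma km_f_far i j : (i <= m.+3)%N -> (j <= m.+3)%N -> (i.+1 < j)%N || (j.+1 < i)%N ->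
  km i * f j = f j * km i.
Proof. by move=> hi hj hij; rewrite km_f // cartan_far // expr0z scale1r. Qed.

Lemma km_e_succ i : (i < m.+3)%N -> km i * e i.+1 = q *: (e i.+1 * km i).
Proof. by move=> hi; rewrite km_e ?cartan_succr ?opprK ?expr1z // ltnW. Qed.

Lemma km_succ_e i : (i < m.+3)%N -> km i.+1 * e i = q *: (e i * km i.+1).
Proof. by move=> hi; rewrite km_e ?cartan_succl ?opprK ?expr1z // ltnW. Qed.

Lemma kp_e_succ i : (i < m.+3)%N -> kp i * e i.+1 = q^-1 *: (e i.+1 * kp i).
Proof. by move=> hi; rewrite kp_e ?cartan_succr ?exprN1 // ltnW. Qed.

Lemma km_e_diag i : (i <= m.+3)%N -> km i * e i = (q * q)^-1 *: (e i * km i).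
Proof. by move=> hi; rewrite km_e ?cartan_diag // -invr_expz expr2. Qed.

Lemma km_f_succ i : (i < m.+3)%N -> km i * f i.+1 = q^-1 *: (f i.+1 * km i).
Proof. by move=> hi; rewrite km_f ?cartan_succr ?exprN1 // ltnW. Qed.

Lemma km_succ_f i : (i < m.+3)%N -> km i.+1 * f i = q^-1 *: (f i * km i.+1).
Proof. by move=> hi; rewrite km_f ?cartan_succl ?exprN1 // ltnW. Qed.

Lemma km_f_diag i : (i <= m.+3)%N -> km i * f i = (q * q) *: (f i * km i).
Proof. by move=> hi; rewrite km_f ?cartan_diag // expr2. Qed.

Definition Eroot s := qchain e q^-1 s m.+2.
Definition Froot s := qchain f q s m.+1.

Lemma ErootS s : (s <= m.+1)%N -> Eroot s = qcomm (e s) (Eroot s.+1) q^-1.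
Proof. by move=> hs; rewrite /Eroot qchainS. Qed.

Lemma FrootS s : (s <= m)%N -> Froot s = qcomm (f s) (Froot s.+1) q.
Proof. by move=> hs; rewrite /Froot qchainS. Qed.

Lemma Eroot_f i s : (i < s <= m.+2)%N -> Eroot s * f i = f i * Eroot s.
Proof.
move=> hs; symmetry; apply: commute_qchain; first lia.
by move=> j hj; symmetry; apply: e_f_comm; lia.
Qed.

Lemma e_Froot i s : (i <= m.+3)%N -> (s <= m.+1)%N -> (i < s)%N || (m.+1 < i)%N ->
  e i * Froot s = Froot s * e i.
Proof. by move=> hi hs his; apply: commute_qchain => // j hj; apply: e_f_comm; lia. Qed.

Lemma f_Froot i s : (i.+2 <= s <= m.+1)%N -> f i * Froot s = Froot s * f i.
Proof. by move=> his; apply: commute_qchain => [|j hj]; [lia | apply: f_far; lia]. Qed.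

Lemma km_Eroot_far i s : (i.+1 < s <= m.+2)%N -> km i * Eroot s = Eroot s * km i.
Proof. by move=> his; apply: commute_qchain => [|j hj]; [lia | apply: km_e_far; lia]. Qed.

Lemma km_Froot_far i s : (i.+1 < s <= m.+1)%N -> km i * Froot s = Froot s * km i.
Proof. by move=> his; apply: commute_qchain => [|j hj]; [lia | apply: km_f_far; lia]. Qed.

Lemma km_Eroot_succ s : (s <= m.+1)%N -> km s * Eroot s.+1 = q *: (Eroot s.+1 * km s).
Proof.
move=> hs; apply: skew_commute_qchain => //; first by apply: km_e_succ; lia.
by move=> j hj; apply: km_e_far; lia.
Qed.

Lemma kp_Eroot_succ s : (s <= m.+1)%N -> kp s * Eroot s.+1 = q^-1 *: (Eroot s.+1 * kp s).
Proof.
move=> hs; apply: skew_commute_qchain => //; first by apply: kp_e_succ; lia.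
by move=> j hj; apply: kp_e_far; lia.
Qed.

Lemma km_Froot_succ s : (s <= m)%N -> km s * Froot s.+1 = q^-1 *: (Froot s.+1 * km s).
Proof.
move=> hs; apply: skew_commute_qchain => //; first by apply: km_f_succ; lia.
by move=> j hj; apply: km_f_far; lia.
Qed.

Lemma Eroot_f_diag s : (s <= m.+1)%N -> Eroot s * f s = f s * Eroot s - Eroot s.+1 * km s.
Proof.
move=> hs; have /e_f_diag hef : (s <= m.+3)%N by lia.
have hEf : Eroot s.+1 * f s = f s * Eroot s.+1 by apply: Eroot_f; lia.
have hkpE := kp_Eroot_succ hs; have hkmE := km_Eroot_succ hs.
by rewrite (ErootS hs); move: hef hEf hkpE hkmE; nc_ring.
Qed.

(* For [s = m.+1], [Froot s] is the single generator [f s], hence the second branch. *)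
Definition EFcomm s :=
  if (s <= m)%N then - (Eroot s.+1 * km s * Froot s.+1) + q *: (Froot s.+1 * Eroot s.+1 * km s)
  else - (Eroot s.+1 * km s).

Lemma Eroot_Froot_succ s : (s <= m)%N ->
  Eroot s.+1 * Froot s.+1 = Froot s.+1 * Eroot s.+1 + EFcomm s.+1 ->
  Eroot s * Froot s.+1 = Froot s.+1 * Eroot s.
Proof.
move=> hs IH; rewrite ErootS; last lia.
have heF : e s * Froot s.+1 = Froot s.+1 * e s by apply: e_Froot; lia.
have heE : e s * Eroot s.+2 = Eroot s.+2 * e s.
  by apply: commute_qchain => [|j hj]; [lia | apply: e_far; lia].
have /(skew_swap q_neq0) hek : km s.+1 * e s = q *: (e s * km s.+1) by apply: km_succ_e; lia.
move: IH; rewrite /EFcomm; case: ifP => hsm IH.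
- have heF2 : e s * Froot s.+2 = Froot s.+2 * e s by apply: e_Froot; lia.
  by move: IH heF heE heF2 hek; nc_ring.
- by move: IH heF heE hek; nc_ring.
Qed.

Lemma Eroot_Froot s : (s <= m.+1)%N -> Eroot s * Froot s = Froot s * Eroot s + EFcomm s.
Proof.
move=> hs; elim/down_ind: s / hs => [|s hs IH].
  rewrite /Froot qchain_id Eroot_f_diag // /EFcomm ifF; last lia.
  by rewrite addrC.
have hEf := Eroot_f_diag (ltnW hs).
have hEF := Eroot_Froot_succ hs IH.
by rewrite FrootS // /EFcomm ifT //; move: hEf hEF; nc_ring.
Qed.

Lemma EFcomm2_f1 : EFcomm 2 * f 1 = q^-1 *: (f 1 * EFcomm 2).
Proof.
have hEf : Eroot 3 * f 1 = f 1 * Eroot 3 by apply: Eroot_f; lia.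
have hkf : km 2 * f 1 = q^-1 *: (f 1 * km 2) by apply: km_succ_f; lia.
rewrite /EFcomm; case: ifP => hm.
- have hFf : Froot 3 * f 1 = f 1 * Froot 3 by symmetry; apply: f_Froot; lia.
  by move: hEf hkf hFf; nc_ring.
- by move: hEf hkf; nc_ring.
Qed.

Lemma Eroot2_Eroot3 : Eroot 2 * Eroot 3 = q *: (Eroot 3 * Eroot 2).
Proof.
have h : serre q (Eroot 3) (e 2) = 0.
  by apply: (serre_qchain_g q_neq0 qq1_neq0 e_far e_serre); lia.
by rewrite ErootS; [exact: serre_skew_r | lia].
Qed.

Lemma Eroot2_km2 : Eroot 2 * km 2 = q *: (km 2 * Eroot 2).
Proof.
have hke : km 2 * e 2 = (q * q)^-1 *: (e 2 * km 2) by apply: km_e_diag; lia.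
have hkE : km 2 * Eroot 3 = q *: (Eroot 3 * km 2) by apply: km_Eroot_succ; lia.
have : km 2 * Eroot 2 = q^-1 *: (Eroot 2 * km 2).
  by rewrite ErootS; [move: hke hkE; nc_ring | lia].
by move/(skew_swap (invr_neq0 q_neq0)); rewrite invrK.
Qed.

Lemma Eroot2_EFcomm2 : Eroot 2 * EFcomm 2 = (q * q) *: (EFcomm 2 * Eroot 2).
Proof.
have hEE := Eroot2_Eroot3; have hEk := Eroot2_km2.
rewrite /EFcomm; case: ifP => hm.
- have hEF : Eroot 2 * Froot 3 = Froot 3 * Eroot 2.
    by apply: Eroot_Froot_succ => //; apply: Eroot_Froot; lia.
  by move: hEE hEF hEk; nc_ring.
- by move: hEE hEk; nc_ring.
Qed.

Definition B0 c0 := f 0 - c0 *: (e m.+3 * km 0).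
Definition B1 c1 := f 1 - c1 *: (Eroot 2 * km 1).

Lemma serre_B1_Froot c1 : serre q (B1 c1) (Froot 2) = 0.
Proof.
have hkf : km 1 * f 1 = (q * q) *: (f 1 * km 1) by apply: km_f_diag; lia.
have hkE : km 1 * Eroot 2 = q *: (Eroot 2 * km 1) by apply: km_Eroot_succ; lia.
have hkF : km 1 * Froot 2 = q^-1 *: (Froot 2 * km 1) by apply: km_Froot_succ; lia.
have hEf : Eroot 2 * f 1 = f 1 * Eroot 2 by apply: Eroot_f; lia.
have hEF : Eroot 2 * Froot 2 = Froot 2 * Eroot 2 + EFcomm 2 by apply: Eroot_Froot; lia.
have hkD : km 1 * EFcomm 2 = EFcomm 2 * km 1.
  have -> : EFcomm 2 = Eroot 2 * Froot 2 - Froot 2 * Eroot 2 by rewrite hEF addrAC subrr add0r.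
  by move: hkE hkF; nc_ring.
have hDf := EFcomm2_f1; have hED := Eroot2_EFcomm2.
have /(serre_left q_neq0) hfF : serre q (f 1) (Froot 2) = 0.
  by apply: (serre_g_qchain q_neq0 qq1_neq0 f_far f_serre); lia.
rewrite /serre /B1; move: hkf hkE hkF hkD hEf hEF hDf hED hfF; nc_ring.
Qed.

Lemma serre_B1_B0 c0 c1 : serre q (B1 c1) (B0 c0) = 0.
Proof.
have hk0f1 : km 0 * f 1 = q^-1 *: (f 1 * km 0) by apply: km_f_succ.
have hk0f0 : km 0 * f 0 = (q * q) *: (f 0 * km 0) by apply: km_f_diag.
have hk0E : km 0 * Eroot 2 = Eroot 2 * km 0 by apply: km_Eroot_far; lia.
have hk0e : km 0 * e m.+3 = e m.+3 * km 0 by apply: km_e_far; lia.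
have hk1f0 : km 1 * f 0 = q^-1 *: (f 0 * km 1) by apply: km_succ_f.
have hk1f1 : km 1 * f 1 = (q * q) *: (f 1 * km 1) by apply: km_f_diag; lia.
have hk1E : km 1 * Eroot 2 = q *: (Eroot 2 * km 1) by apply: km_Eroot_succ; lia.
have hk1e : km 1 * e m.+3 = e m.+3 * km 1 by apply: km_e_far; lia.
have hkk := km_comm 1 0.
have hf1E : f 1 * Eroot 2 = Eroot 2 * f 1 by symmetry; apply: Eroot_f; lia.
have hf0E : f 0 * Eroot 2 = Eroot 2 * f 0 by symmetry; apply: Eroot_f; lia.
have hf0e : f 0 * e m.+3 = e m.+3 * f 0 by symmetry; apply: e_f_comm.
have hf1e : f 1 * e m.+3 = e m.+3 * f 1 by symmetry; apply: e_f_comm.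
have /(serre_left q_neq0) hff : serre q (f 1) (f 0) = 0 by apply: (f_serre _).2.
have /(serre_left q_neq0) hEe : serre q (Eroot 2) (e m.+3) = 0.
  by apply: (serre_qchain_next q_neq0 qq1_neq0 e_far e_serre); lia.
rewrite /serre /B1 /B0.
by move: hk0f1 hk0f0 hk0E hk0e hk1f0 hk1f1 hk1E hk1e hkk hf1E hf0E hf0e hf1e hff hEe; nc_ring.
Qed.

Lemma B0_Froot c0 : B0 c0 * Froot 2 = Froot 2 * B0 c0.
Proof.
have hfF : f 0 * Froot 2 = Froot 2 * f 0 by apply: f_Froot; lia.
have heF : e m.+3 * Froot 2 = Froot 2 * e m.+3 by apply: e_Froot; lia.
have hkF : km 0 * Froot 2 = Froot 2 * km 0 by apply: km_Froot_far; lia.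
by rewrite /B0; move: hfF heF hkF; nc_ring.
Qed.

Lemma B1_commute_nested_qcomm c0 c1 :
  B1 c1 * qcomm (B0 c0) (qcomm (B1 c1) (Froot 2) q) q
  = qcomm (B0 c0) (qcomm (B1 c1) (Froot 2) q) q * B1 c1.
Proof.
apply: (commute_nested_qcomm q_neq0 qq1_neq0).
- exact: B0_Froot.
- exact: serre_B1_Froot.
- exact: serre_B1_B0.
Qed.

Lemma Eroot2_rcons : Eroot 2 = qcomm (qchain e q^-1 2 m.+1) (e m.+2) q^-1.
Proof. by apply: qchain_rcons => [|j hj]; [lia | symmetry; apply: e_far; lia]. Qed.

End TypeAChain.

(** * The chain inside U_q(sl_{n+1}) *)

Lemma coord_alpha n i j : (1 <= j <= n)%N -> Defs.coord (alpha n i) j = cartan i j.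
Proof.
move=> hj; have hj' : (j.-1 < n)%N by lia.
rewrite /Defs.coord (big_pred1 (Ordinal hj')) /=; last first.
  by move=> k; apply/eqP/eqP => [hk|->]; [apply: val_inj => /=; lia | rewrite /=; lia].
by rewrite ffunE /=; congr cartan; lia.
Qed.

Lemma coordN n (mu : wt n) j : Defs.coord (- mu) j = - Defs.coord mu j.
Proof. by rewrite /Defs.coord -sumrN; apply: eq_bigr => k _; rewrite ffunE. Qed.

Lemma serreE (F : fieldType) (A : algType F) (q : F) (v u : A) :
  serre q v u = v ^+ 2 * u - (q + q^-1) *: (v * u * v) + u * v ^+ 2.
Proof. by rewrite /serre !expr2 !mulrA. Qed.

Section UqChain.
Variables (F : fieldType) (A : algType F) (q : F).
Hypotheses (q_neq0 : q != 0) (qq1_neq0 : q * q + 1 != 0) (qq1_sub_neq0 : q * q - 1 != 0).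
Variables (n : nat) (E Fg : nat -> A) (K : wt n -> A).
Hypothesis rel : UqRel q E Fg K.
Variables (m : nat) (p : nat -> nat).
Hypothesis m_gt0 : (0 < m)%N.
Hypothesis p_range : forall i, (i <= m.+3)%N -> (1 <= p i <= n)%N.
Hypothesis p_cartan : forall i j, (i <= m.+3)%N -> (j <= m.+3)%N ->
  cartan (p i) (p j) = cartan i j.

Lemma E_F_comm_p i j : (i <= m.+3)%N -> (j <= m.+3)%N -> i != j ->
  E (p i) * Fg (p j) = Fg (p j) * E (p i).
Proof.
move=> hi hj hij; case: rel => _ _ _ _ [EF _].
apply/eqP; rewrite -subr_eq0 EF ?p_range //; case: ifP => // /eqP hp.
have /cartan_eq2/eqP : cartan i j = 2 by rewrite -p_cartan // hp cartan_diag.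
by rewrite (negbTE hij).
Qed.

Lemma E_F_diag_p i : (i <= m.+3)%N -> E (p i) * Fg (p i) =
  Fg (p i) * E (p i) + (q - q^-1)^-1 *: (K (alpha n (p i)) - K (- alpha n (p i))).
Proof.
move=> hi; case: rel => _ _ _ _ [EF _].
by rewrite -[LHS](subrK (Fg (p i) * E (p i))) EF ?eqxx ?p_range // addrC.
Qed.

Lemma far_p i j : (i.+2 <= j <= m.+3)%N ->
  E (p i) * E (p j) = E (p j) * E (p i) /\ Fg (p i) * Fg (p j) = Fg (p j) * Fg (p i).
Proof.
move=> hij; case: rel => _ _ _ _ [_ Srel].
have hi : (i <= m.+3)%N by lia.
have hj : (j <= m.+3)%N by lia.
have [_ far] := Srel (p i) (p j) (p_range hi) (p_range hj).
by apply: far; rewrite p_cartan // cartan_far //; lia.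
Qed.

Lemma serre_p i : (i < m.+3)%N ->
  [/\ serre q (E (p i)) (E (p i.+1)) = 0, serre q (E (p i.+1)) (E (p i)) = 0,
      serre q (Fg (p i)) (Fg (p i.+1)) = 0 & serre q (Fg (p i.+1)) (Fg (p i)) = 0].
Proof.
move=> hi; case: rel => _ _ _ _ [_ Srel].
have hi' : (i <= m.+3)%N by lia.
have [+ _] := Srel (p i) (p i.+1) (p_range hi') (p_range hi).
have [+ _] := Srel (p i.+1) (p i) (p_range hi) (p_range hi').
rewrite !p_cartan // cartan_succr cartan_succl !serreE.
by move=> /(_ erefl) [? ?] /(_ erefl) [? ?].
Qed.

Lemma Km_E_p i j : (i <= m.+3)%N -> (j <= m.+3)%N ->
  K (- alpha n (p i)) * E (p j) = q ^ (- cartan i j) *: (E (p j) * K (- alpha n (p i))).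
Proof.
by move=> hi hj; case: rel => _ _ KE _ _; rewrite KE ?coordN ?coord_alpha ?p_cartan ?p_range.
Qed.

Lemma Kp_E_p i j : (i <= m.+3)%N -> (j <= m.+3)%N ->
  K (alpha n (p i)) * E (p j) = q ^ (cartan i j) *: (E (p j) * K (alpha n (p i))).
Proof. by move=> hi hj; case: rel => _ _ KE _ _; rewrite KE ?coord_alpha ?p_cartan ?p_range. Qed.

Lemma Km_F_p i j : (i <= m.+3)%N -> (j <= m.+3)%N ->
  K (- alpha n (p i)) * Fg (p j) = q ^ (cartan i j) *: (Fg (p j) * K (- alpha n (p i))).
Proof.
move=> hi hj; case: rel => _ _ _ KF _.
by rewrite KF ?coordN ?opprK ?coord_alpha ?p_cartan ?p_range.
Qed.

Lemma Km_comm_p i j :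
  K (- alpha n (p i)) * K (- alpha n (p j)) = K (- alpha n (p j)) * K (- alpha n (p i)).
Proof. by case: rel => _ KD _ _ _; rewrite -!KD addrC. Qed.

Lemma Uq_chain_commute c0 c1 :
  let Km j := K (- alpha n (p j)) in
  let B0 := Fg (p 0) - c0 *: (E (p m.+3) * Km 0) in
  let B1 := Fg (p 1) -
    c1 *: (qcomm (qchain (fun j => E (p j)) q^-1 2 m.+1) (E (p m.+2)) q^-1 * Km 1) in
  let S := qcomm B0 (qcomm B1 (qchain (fun j => Fg (p j)) q 2 m.+1) q) q in
  B1 * S = S * B1.
Proof.
have E_far i j (hij : (i.+2 <= j <= m.+3)%N) := (far_p hij).1.
have F_far i j (hij : (i.+2 <= j <= m.+3)%N) := (far_p hij).2.
have E_serre i (hi : (i < m.+3)%N) := let: And4 h1 h2 _ _ := serre_p hi in conj h1 h2.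
have F_serre i (hi : (i < m.+3)%N) := let: And4 _ _ h3 h4 := serre_p hi in conj h3 h4.
have := B1_commute_nested_qcomm q_neq0 qq1_neq0 qq1_sub_neq0 m_gt0 E_F_comm_p E_F_diag_p
  E_far F_far E_serre F_serre Km_E_p Kp_E_p Km_F_p Km_comm_p c0 c1.
by rewrite /B1 (Eroot2_rcons q_neq0 qq1_neq0 qq1_sub_neq0 m_gt0 E_far).
Qed.

End UqChain.

Section RootVectors.
Variables (F : fieldType) (A : algType F) (n r : nat) (q : F) (E Fg : nat -> A).

Lemma EXp_qchain : EXp n r q E = qchain E q^-1 r.+1 (n - r).
Proof. by rewrite /EXp /qchain subnS. Qed.

Lemma FXp_qchain : FXp n r q Fg = qchain Fg q r.+1 (n - r).
Proof. by rewrite /FXp /qchain subnS. Qed.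

Hypothesis hrn : (r.*2.+1 <= n)%N.

Lemma EXm_qchain :
  EXm n r q E = qchain (fun j => E ((n - r).+2 - j)%N) q^-1 2 (n - r - r).+1.
Proof.
rewrite qchain_reflect; last lia.
have -> : ((n - r).+2 - (n - r - r).+1 = r.+1)%N by lia.
by have -> : ((n - r - r).+1 - 2 = (n - r - r).-1)%N by lia.
Qed.

Lemma FXm_qchain :
  FXm n r q Fg = qchain (fun j => Fg ((n - r).+2 - j)%N) q 2 (n - r - r).+1.
Proof.
rewrite qchain_reflect; last lia.
have -> : ((n - r).+2 - (n - r - r).+1 = r.+1)%N by lia.
by have -> : ((n - r - r).+1 - 2 = (n - r - r).-1)%N by lia.
Qed.

End RootVectors.

Section BrCommutation.
Variables (F : fieldType) (A : algType F) (q : F).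
Hypotheses (q_neq0 : q != 0) (qq1_neq0 : q * q + 1 != 0) (qq1_sub_neq0 : q * q - 1 != 0).
Variables (n r : nat) (E Fg : nat -> A) (K : wt n -> A) (c : nat -> F).
Hypothesis rel : UqRel q E Fg K.
Hypotheses (r_ge2 : (2 <= r)%N) (hrn : (r.*2.+1 <= n)%N).

Lemma Br_Sel_commute :
  Br r q E Fg K c * Sel r q E Fg K c = Sel r q E Fg K c * Br r q E Fg K c.
Proof.
have m_gt0 : (0 < n - r - r)%N by lia.
have p_range i : (i <= (n - r - r).+3)%N -> (1 <= r.-1 + i <= n)%N by lia.
have p_cartan i j : (i <= (n - r - r).+3)%N -> (j <= (n - r - r).+3)%N ->
    cartan (r.-1 + i) (r.-1 + j) = cartan i j.
  by move=> *; apply: cartan_congr; lia.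
move: (Uq_chain_commute q_neq0 qq1_neq0 qq1_sub_neq0 rel m_gt0 p_range p_cartan (c r.-1) (c r)).
cbv beta zeta; rewrite !qchain_shift addn0.
have -> : (r.-1 + 1 = r)%N by lia.
have -> : (r.-1 + 2 = r.+1)%N by lia.
have -> : (r.-1 + (n - r - r).+1 = n - r)%N by lia.
have -> : (r.-1 + (n - r - r).+2 = tau n r)%N by rewrite /tau; lia.
have -> : (r.-1 + (n - r - r).+3 = tau n r.-1)%N by rewrite /tau; lia.
by rewrite -EXp_qchain -FXp_qchain.
Qed.

Lemma Btr_Stau_commute :
  Btr r q E Fg K c * Stau r q E Fg K c = Stau r q E Fg K c * Btr r q E Fg K c.
Proof.
have m_gt0 : (0 < n - r - r)%N by lia.
have p_range i : (i <= (n - r - r).+3)%N -> (1 <= (n - r).+2 - i <= n)%N by lia.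
have p_cartan i j : (i <= (n - r - r).+3)%N -> (j <= (n - r - r).+3)%N ->
    cartan ((n - r).+2 - i) ((n - r).+2 - j) = cartan i j.
  by move=> *; apply: cartan_congr; lia.
move: (Uq_chain_commute q_neq0 qq1_neq0 qq1_sub_neq0 rel m_gt0 p_range p_cartan
  (c (tau n r.-1)) (c (tau n r))).
cbv beta zeta; rewrite -EXm_qchain // -FXm_qchain // subn0.
have -> : ((n - r).+2 = tau n r.-1)%N by rewrite /tau; lia.
have -> : (tau n r.-1 - 1 = tau n r)%N by rewrite /tau; lia.
have -> : (tau n r.-1 - (n - r - r).+2 = r)%N by rewrite /tau; lia.
have -> : (tau n r.-1 - (n - r - r).+3 = tau n (tau n r.-1))%N by rewrite /tau; lia.
by [].
Qed.

End BrCommutation.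

Lemma tofrac_neq0 (k : fieldType) (p : {poly k}) : p.[0] != 0 -> tofrac p != 0.
Proof. by rewrite tofrac_eq0; apply: contraNneq => ->; rewrite horner0. Qed.

Lemma qpar_neq0 (k : fieldType) : qpar k != 0.
Proof. by rewrite expf_neq0 // tofrac_eq0 polyX_eq0. Qed.

Lemma qpar_sqr (k : fieldType) : qpar k * qpar k = tofrac ('X^4 : {poly k}).
Proof. by rewrite /qpar /qhalf -exprD tofracXn. Qed.

Lemma qpar_sqr_add1_neq0 (k : fieldType) : qpar k * qpar k + 1 != 0.
Proof.
rewrite qpar_sqr -tofrac1 -tofracD tofrac_neq0 //.
by rewrite hornerD hornerXn expr0n hornerC add0r oner_neq0.
Qed.

Lemma qpar_sqr_sub1_neq0 (k : fieldType) : qpar k * qpar k - 1 != 0.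
Proof.
rewrite qpar_sqr -tofrac1 -tofracB tofrac_neq0 //.
by rewrite hornerD hornerN hornerXn expr0n hornerC sub0r oppr_eq0 oner_neq0.
Qed.

Theorem lemmaA4 (k : fieldType) (char0 : [pchar k] =i pred0)
  (n r : nat) (hn : (1 <= n)%N) (hr2 : (2 <= r)%N) (hrn : (r <= uphalf n - 1)%N)
  (A : algType (ratfun k)) (E Fg : nat -> A) (K : wt n -> A) (c : nat -> ratfun k)
  (hrel : UqRel (qpar k) E Fg K)
  (hc0 : forall i, (1 <= i <= n)%N -> ~~ (r < i <= n - r)%N -> c i != 0)
  (hcsym : forall i, (1 <= i <= n)%N -> ~~ (r < i <= n - r)%N ->
             i != r -> i != tau n r -> c i = c (tau n i)) :
  Br r (qpar k) E Fg K c * Sel r (qpar k) E Fg K c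
    = Sel r (qpar k) E Fg K c * Br r (qpar k) E Fg K c /\
  Btr r (qpar k) E Fg K c * Stau r (qpar k) E Fg K c
    = Stau r (qpar k) E Fg K c * Btr r (qpar k) E Fg K c.
Proof.
have hrn' : (r.*2.+1 <= n)%N by move: hrn; rewrite uphalfE; lia.
have hq := qpar_neq0 k; have hq2 := qpar_sqr_add1_neq0 k; have hq3 := qpar_sqr_sub1_neq0 k.
split; [exact: (Br_Sel_commute hq hq2 hq3 c hrel hr2 hrn') |
        exact: (Btr_Stau_commute hq hq2 hq3 c hrel hr2 hrn')].
Qed.
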